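(* Let $F= \left( \begin{bmatrix} f \\ g \end{bmatrix}, \begin{bmatrix} \alpha & \beta \\ \beta^\dagger & \delta \end{bmatrix}, \begin{bmatrix} s \\ t \end{bmatrix} \right): A \to B \otimes C$ be a map in $\mathfrak{G}\left[ (\mathbb{X}, \dagger) \right]_X$, and let $m: B \to C$ be a conditional generator for $\begin{bmatrix} \alpha & \beta \\ \beta^\dagger & \delta \end{bmatrix}$. Then define the map $G_m: B \otimes A \to C$ in $\mathfrak{G}\left[ (\mathbb{X}, \dagger) \right]_X$ as the triple: \begin{align*} G_m = \left( \begin{bmatrix} m & g - m \circ f \end{bmatrix}, \delta - m \circ \beta, t - m\circ s \right) \end{align*} Then $G_m$ is a conditional of $F$.
   Context: Let $(\mathbb{X}, \dagger)$ be a dagger additive category (a dagger category enriched in abelian groups with additive dagger and finite biproducts satisfying $\pi_j^\dagger = \iota_j$; maps between biproducts are written as matrices and the dagger acts as conjugate transpose) and fix an object $X$. A map $p$ is $\dagger$-positive if $p = \phi^\dagger \circ \phi$ for some $\phi$. The Gauss construction $\mathfrak{G}\left[ (\mathbb{X}, \dagger) \right]_X$ is the Markov category with the objects of $\mathbb{X}$, maps $A \to B$ the triples $(f,p,x)$ with $f: A \to B$, $p: B \to B$ $\dagger$-positive, $x: X \to B$; identities $\mathsf{Id}_A = (\mathsf{id}_A,0,0)$; composition $(g,q,y) \circ (f,p,x) = (g \circ f, q + g \circ p \circ g^\dagger, y + g \circ x)$; $A \otimes B = A \oplus B$, $(f,p,x) \otimes (g,q,y) = \left(f \oplus g, p \oplus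 q, \begin{bmatrix} x \\ y \end{bmatrix}\right)$; copy $\mathsf{copy}_A = \left(\begin{bmatrix} \mathsf{id}_A \\ \mathsf{id}_A \end{bmatrix}, 0, 0\right)$, delete $\mathsf{del}_A = (0,0,0): A \to \mathsf{0}$. In $F$, $f: A \to B$, $g: A \to C$, $\alpha: B \to B$, $\beta: C \to B$, $\delta: C \to C$, $s: X \to B$, $t: X \to C$. A conditional generator for a $\dagger$-positive map $\begin{bmatrix} \alpha & \beta \\ \beta^\dagger & \delta \end{bmatrix}: B \oplus C \to B \oplus C$ is a map $m: B \to C$ such that (i) $m \circ \alpha = \beta^\dagger$ and (ii) $\delta - m \circ \beta$ is $\dagger$-positive. A map $G: B \otimes A \to C$ is a conditional of $F: A \to B \otimes C$ if $(\mathsf{Id}_B \otimes G) \circ (\mathsf{copy}_B \otimes \mathsf{Id}_A) \circ (\mathsf{Id}_B \otimes \mathsf{del}_C \otimes \mathsf{Id}_A) \circ (F \otimes \mathsf{Id}_A) \circ \mathsf{copy}_A = F$. *)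

From HB Require Import structures.
From mathcomp Require Import all_boot all_algebra.
Set Implicit Arguments. Unset Strict Implicit. Unset Printing Implicit Defensive.
Import GRing.Theory.
Local Open Scope ring_scope.

Record DagAddCat := {
  Ob : Type;
  XHom : Ob -> Ob -> zmodType;
  xcomp : forall A B C : Ob, XHom B C -> XHom A B -> XHom A C;
  xid : forall A : Ob, XHom A A;
  xdag : forall A B : Ob, XHom A B -> XHom B A;
  comp_assoc : forall A B C D (h : XHom C D) (g : XHom B C) (f : XHom A B),
      xcomp h (xcomp g f) = xcomp (xcomp h g) f;
  comp_id_l : forall A B (f : XHom A B), xcomp (xid B) f = f;
  comp_id_r : forall A B (f : XHom A B), xcomp f (xid A) = f;
  comp_addl : forall A B C (g g' : XHom B C) (f : XHom A B),
      xcomp (g + g') f = xcomp g f + xcomp g' f;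
  comp_addr : forall A B C (g : XHom B C) (f f' : XHom A B),
      xcomp g (f + f') = xcomp g f + xcomp g f';
  dag_comp : forall A B C (g : XHom B C) (f : XHom A B),
      xdag (xcomp g f) = xcomp (xdag f) (xdag g);
  dag_id : forall A, xdag (xid A) = xid A;
  dag_invol : forall A B (f : XHom A B), xdag (xdag f) = f;
  dag_add : forall A B (f f' : XHom A B), xdag (f + f') = xdag f + xdag f';
  zob : Ob;
  zob_zero : xid zob = 0;
  bip : Ob -> Ob -> Ob;
  pi1 : forall A B, XHom (bip A B) A;
  pi2 : forall A B, XHom (bip A B) B;
  io1 : forall A B, XHom A (bip A B);
  io2 : forall A B, XHom B (bip A B);
  pi1_io1 : forall A B, xcomp (pi1 A B) (io1 A B) = xid A;
  pi2_io2 : forall A B, xcomp (pi2 A B) (io2 A B) = xid B;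
  pi1_io2 : forall A B, xcomp (pi1 A B) (io2 A B) = 0;
  pi2_io1 : forall A B, xcomp (pi2 A B) (io1 A B) = 0;
  bip_id : forall A B, xcomp (io1 A B) (pi1 A B) + xcomp (io2 A B) (pi2 A B)
                       = xid (bip A B);
  dag_pi1 : forall A B, xdag (pi1 A B) = io1 A B;
  dag_pi2 : forall A B, xdag (pi2 A B) = io2 A B
}.

Arguments XHom : clear implicits.
Arguments xcomp {_ _ _ _}.
Arguments xid {_}.
Arguments xdag {_ _ _}.
Arguments zob {_}.
Arguments bip {_}.
Arguments pi1 {_}. Arguments pi2 {_}. Arguments io1 {_}. Arguments io2 {_}.

Section Matrices.
Variable X : DagAddCat.
Local Notation Obj := (Ob X).
Local Notation Hm := (XHom X).

Definition mcol (A B C : Obj) (f : Hm A B) (g : Hm A C) : Hm A (bip B C) :=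
  xcomp (io1 B C) f + xcomp (io2 B C) g.
Definition mrow (A B C : Obj) (f : Hm A C) (g : Hm B C) : Hm (bip A B) C :=
  xcomp f (pi1 A B) + xcomp g (pi2 A B).
(* 2x2 block matrix [[a, b], [c, d]] : A1 (+) A2 -> B1 (+) B2 *)
Definition mblock (A1 A2 B1 B2 : Obj) (a : Hm A1 B1) (b : Hm A2 B1)
    (c : Hm A1 B2) (d : Hm A2 B2) : Hm (bip A1 A2) (bip B1 B2) :=
  mcol (mrow a b) (mrow c d).
Definition msum (A B C D : Obj) (f : Hm A B) (g : Hm C D) :
    Hm (bip A C) (bip B D) := mblock f 0 0 g.

Definition dpositive (A : Obj) (p : Hm A A) : Prop :=
  exists (Y : Obj) (phi : Hm A Y), p = xcomp (xdag phi) phi.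

Definition bassoc (P Q R : Obj) : Hm (bip (bip P Q) R) (bip P (bip Q R)) :=
  mcol (xcomp (pi1 P Q) (pi1 (bip P Q) R))
       (mcol (xcomp (pi2 P Q) (pi1 (bip P Q) R)) (pi2 (bip P Q) R)).
Definition brunit (B : Obj) : Hm (bip B zob) B := pi1 B zob.

Definition cond_generator (B C : Obj) (alpha : Hm B B) (beta : Hm C B)
    (delta : Hm C C) (m : Hm B C) : Prop :=
  xcomp m alpha = xdag beta /\ dpositive (delta - xcomp m beta).

Section Gauss.
Variable Xo : Obj.

Record gtriple (A B : Obj) := GT { gf : Hm A B; gp : Hm B B; gx : Hm Xo B }.

Definition is_gmap (A B : Obj) (F : gtriple A B) : Prop := dpositive (gp F).

Definition gId (A : Obj) : gtriple A A := GT (xid A) 0 0.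
Definition gcomp (A B C : Obj) (G : gtriple B C) (F : gtriple A B) : gtriple A C :=
  GT (xcomp (gf G) (gf F))
     (gp G + xcomp (gf G) (xcomp (gp F) (xdag (gf G))))
     (gx G + xcomp (gf G) (gx F)).
Definition gtensor (A B C D : Obj) (F : gtriple A B) (G : gtriple C D) :
    gtriple (bip A C) (bip B D) :=
  GT (msum (gf F) (gf G)) (msum (gp F) (gp G)) (mcol (gx F) (gx G)).
Definition gcopy (A : Obj) : gtriple A (bip A A) := GT (mcol (xid A) (xid A)) 0 0.
Definition gdel (A : Obj) : gtriple A zob := GT 0 0 0.
Definition glift (A B : Obj) (f : Hm A B) : gtriple A B := GT f 0 0.

(* G : B (x) A -> C is a conditional of F : A -> B (x) C:
   (Id_B (x) G) o (copy_B (x) Id_A) o (Id_B (x) del_C (x) Id_A) o (F (x) Id_A) o copy_A = F,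
   with the (implicit in the paper) associator and unitor written explicitly. *)
Definition is_conditional (A B C : Obj) (F : gtriple A (bip B C))
    (G : gtriple (bip B A) C) : Prop :=
  is_gmap G /\
  gcomp (gtensor (gId B) G)
  (gcomp (glift (bassoc B B A))
  (gcomp (gtensor (gcopy B) (gId A))
  (gcomp (gtensor (glift (brunit B)) (gId A))
  (gcomp (gtensor (gtensor (gId B) (gdel C)) (gId A))
  (gcomp (gtensor F (gId A))
         (gcopy A)))))) = F.

End Gauss.
End Matrices.

From HB Require Import structures.
From mathcomp Require Import all_boot all_algebra.
Import GRing.Theory.
Local Open Scope ring_scope.

(* The five structural steps of the conditional equation keep only the
   B-marginal (f, α, s) of F and copy it next to the input, giving a map
   A → B ⊗ (B ⊗ A).  Composing with Id_B ⊗ G, where G = ([u v], q, y), yields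
     ([f; u f + v], [[α, α u†], [u α, q + u α u†]], [s; y + u s]).
   For G = G_m this is F: m α = β† by (i), and α is self-adjoint (a diagonal
   block of a positive map), so α m† = β and m α m† = m β. *)

Section DaggerAdditive.
Variable X : DagAddCat.
Implicit Types A B C D : Ob X.

Lemma comp0l A B C (f : XHom X A B) : xcomp (0 : XHom X B C) f = 0.
Proof. by apply: (@addrI _ (xcomp 0 f)); rewrite -comp_addl !addr0. Qed.

Lemma comp0r A B C (g : XHom X B C) : xcomp g (0 : XHom X A B) = 0.
Proof. by apply: (@addrI _ (xcomp g 0)); rewrite -comp_addr !addr0. Qed.

Lemma dag0 A B : xdag (0 : XHom X A B) = 0.
Proof. by apply: (@addrI _ (xdag (0 : XHom X A B))); rewrite -dag_add !addr0. Qed.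

Lemma dpositive_dag A (p : XHom X A A) : dpositive p -> xdag p = p.
Proof. by case=> Y [phi ->]; rewrite dag_comp dag_invol. Qed.

Lemma pi1E A B : pi1 A B = mrow (xid A) 0.
Proof. by rewrite /mrow comp_id_l comp0l addr0. Qed.

Lemma pi2E A B : pi2 A B = mrow 0 (xid B).
Proof. by rewrite /mrow comp_id_l comp0l add0r. Qed.

Lemma io1E A B : io1 A B = mcol (xid A) 0.
Proof. by rewrite /mcol comp_id_r comp0r addr0. Qed.

Lemma io2E A B : io2 A B = mcol 0 (xid B).
Proof. by rewrite /mcol comp_id_r comp0r add0r. Qed.

Lemma mcol0 A B C : mcol (0 : XHom X A B) (0 : XHom X A C) = 0.
Proof. by rewrite /mcol !comp0r addr0. Qed.

Lemma mrow0 A B C : mrow (0 : XHom X A C) (0 : XHom X B C) = 0.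
Proof. by rewrite /mrow !comp0l addr0. Qed.

Lemma mcolD A B C (a a' : XHom X A B) (b b' : XHom X A C) :
  mcol a b + mcol a' b' = mcol (a + a') (b + b').
Proof. by rewrite /mcol !comp_addr addrACA. Qed.

Lemma mrowD A B C (a a' : XHom X A C) (b b' : XHom X B C) :
  mrow a b + mrow a' b' = mrow (a + a') (b + b').
Proof. by rewrite /mrow !comp_addl addrACA. Qed.

Lemma comp_mcol A B C D (a : XHom X A B) (b : XHom X A C) (h : XHom X D A) :
  xcomp (mcol a b) h = mcol (xcomp a h) (xcomp b h).
Proof. by rewrite /mcol comp_addl -!comp_assoc. Qed.

Lemma comp_mrow A B C D (a : XHom X A C) (b : XHom X B C) (h : XHom X C D) :
  xcomp h (mrow a b) = mrow (xcomp h a) (xcomp h b).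
Proof. by rewrite /mrow comp_addr !comp_assoc. Qed.

Lemma mrow_mcol A B C D (a : XHom X A D) (b : XHom X B D) (c : XHom X C A) (d : XHom X C B) :
  xcomp (mrow a b) (mcol c d) = xcomp a c + xcomp b d.
Proof.
rewrite /mcol /mrow comp_addl !comp_addr -!comp_assoc.
rewrite ![xcomp (pi1 _ _) (xcomp _ _)]comp_assoc ![xcomp (pi2 _ _) (xcomp _ _)]comp_assoc.
by rewrite pi1_io1 pi2_io2 pi1_io2 pi2_io1 !comp_id_l !comp0l !comp0r addr0 add0r.
Qed.

Lemma mrow_mcolE A1 A2 B1 B2 (a : XHom X A1 B1) (b : XHom X A2 B1)
    (c : XHom X A1 B2) (d : XHom X A2 B2) :
  mrow (mcol a c) (mcol b d) = mcol (mrow a b) (mrow c d).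
Proof. by rewrite /mrow /mcol !comp_addl !comp_addr !comp_assoc addrACA. Qed.

Lemma dag_mcol A B C (a : XHom X A B) (b : XHom X A C) :
  xdag (mcol a b) = mrow (xdag a) (xdag b).
Proof.
by rewrite /mcol /mrow dag_add !dag_comp -dag_pi1 -dag_pi2 !dag_invol.
Qed.

Lemma dag_mrow A B C (a : XHom X A C) (b : XHom X B C) :
  xdag (mrow a b) = mcol (xdag a) (xdag b).
Proof. by rewrite -[a]dag_invol -[b]dag_invol -dag_mcol !dag_invol. Qed.

Lemma zero_mcol A B C : (0 : XHom X A (bip B C)) = mcol 0 0.
Proof. by rewrite mcol0. Qed.

Lemma zero_mrow A B C : (0 : XHom X (bip A B) C) = mrow 0 0.
Proof. by rewrite mrow0. Qed.

End DaggerAdditive.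

(* The distributivity laws must stay out of the rule set:
   [mcol] and [mrow] unfold to sums, so the [_ + _] pattern of [comp_addl]
   would match, and take apart, every block. *)
Ltac mx_normalize :=
  rewrite /msum /mblock /bassoc /brunit;
  repeat progress rewrite ?pi1E ?pi2E ?io1E ?io2E ?zero_mcol ?zero_mrow
    ?dag_comp ?dag_invol ?dag_id ?dag0 ?dag_mcol ?dag_mrow
    ?comp_id_l ?comp_id_r ?comp0l ?comp0r -?comp_assoc
    ?comp_mcol ?comp_mrow ?mrow_mcol ?mrow_mcolE ?mcolD ?mrowD ?addr0 ?add0r.

Lemma dpositive_mblock_dag11 (X : DagAddCat) (B C : Ob X) (a : XHom X B B)
    (b : XHom X C B) (c : XHom X B C) (d : XHom X C C) :
  dpositive (mblock a b c d) -> xdag a = a.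
Proof.
move=> /dpositive_dag /(congr1 (fun M => xcomp (pi1 B C) (xcomp M (io1 B C)))).
by mx_normalize.
Qed.

Section GaussConstruction.
Variables (X : DagAddCat) (Xo : Ob X).
Implicit Types A B C D : Ob X.

Lemma gcompA A B C D (H : gtriple Xo C D) (G : gtriple Xo B C) (F : gtriple Xo A B) :
  gcomp H (gcomp G F) = gcomp (gcomp H G) F.
Proof.
rewrite /gcomp /=; congr GT; first exact: comp_assoc.
  by rewrite comp_addl comp_addr addrA dag_comp -!comp_assoc.
by rewrite comp_addr addrA comp_assoc.
Qed.

Lemma gcomp_gliftl A B C (h : XHom X B C) (F : gtriple Xo A B) :
  gcomp (glift Xo h) F = GT (xcomp h (gf F)) (xcomp h (xcomp (gp F) (xdag h))) (xcomp h (gx F)).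
Proof. by rewrite /gcomp /= !add0r. Qed.

Lemma gcomp_glift A B C (h : XHom X B C) (k : XHom X A B) :
  gcomp (glift Xo h) (glift Xo k) = glift Xo (xcomp h k).
Proof. by rewrite gcomp_gliftl /= comp0l !comp0r. Qed.

Lemma gtensor_glift A B C D (f : XHom X A B) (g : XHom X C D) :
  gtensor (glift Xo f) (glift Xo g) = glift Xo (msum f g).
Proof. by rewrite /gtensor /glift /msum /mblock /= !mrow0 !mcol0. Qed.

Lemma gcomp_tensor_copy A D (F : gtriple Xo A D) :
  gcomp (gtensor F (gId Xo A)) (gcopy Xo A)
  = GT (mcol (gf F) (xid A)) (msum (gp F) 0) (mcol (gx F) 0).
Proof. by rewrite /gcomp /gtensor /gcopy /=; congr GT; mx_normalize. Qed.

End GaussConstruction.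

Section Conditional.
Variables (X : DagAddCat) (Xo A B C : Ob X).

Lemma gcomp_copy_marginal (f : XHom X A B) (g : XHom X A C) (alpha : XHom X B B)
    (beta : XHom X C B) (gamma : XHom X B C) (delta : XHom X C C)
    (s : XHom X Xo B) (t : XHom X Xo C) :
  gcomp (glift Xo (bassoc B B A))
  (gcomp (gtensor (gcopy Xo B) (gId Xo A))
  (gcomp (gtensor (glift Xo (brunit B)) (gId Xo A))
  (gcomp (gtensor (gtensor (gId Xo B) (gdel Xo C)) (gId Xo A))
  (gcomp (gtensor (GT (mcol f g) (mblock alpha beta gamma delta) (mcol s t)) (gId Xo A))
         (gcopy Xo A)))))
  = GT (mcol f (mcol f (xid A)))
       (mblock alpha (mrow alpha 0) (mcol alpha 0) (msum alpha (0 : XHom X A A)))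
       (mcol s (mcol s 0)).
Proof.
rewrite gcomp_tensor_copy !gtensor_glift !gcompA !gcomp_glift.
set K := (M in gcomp (glift _ M) _).
(* K sends (b, c, a) to (b, (b, a)); normalizing it before it is duplicated in
   K P K† keeps the block computation small. *)
have -> : K = mcol (xcomp (pi1 B C) (pi1 _ A)) (mcol (xcomp (pi1 B C) (pi1 _ A)) (pi2 _ A)).
  by rewrite /K; mx_normalize.
by rewrite gcomp_gliftl; congr GT; mx_normalize.
Qed.

Lemma gcomp_tensor_id_row (f : XHom X A B) (alpha : XHom X B B) (s : XHom X Xo B)
    (u : XHom X B C) (v : XHom X A C) (q : XHom X C C) (y : XHom X Xo C) :
  gcomp (gtensor (gId Xo B) (GT (mrow u v) q y))
    (GT (mcol f (mcol f (xid A)))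
        (mblock alpha (mrow alpha 0) (mcol alpha 0) (msum alpha (0 : XHom X A A)))
        (mcol s (mcol s 0)))
  = GT (mcol f (xcomp u f + v))
       (mblock alpha (xcomp alpha (xdag u)) (xcomp u alpha) (q + xcomp u (xcomp alpha (xdag u))))
       (mcol s (y + xcomp u s)).
Proof. by rewrite /gcomp /gtensor /=; congr GT; mx_normalize. Qed.

End Conditional.

Theorem mainTheorem7 (X : DagAddCat) (Xo A B C : Ob X)
  (f : XHom X A B) (g : XHom X A C) (alpha : XHom X B B) (beta : XHom X C B)
  (delta : XHom X C C) (s : XHom X Xo B) (t : XHom X Xo C) (m : XHom X B C) :
  dpositive (mblock alpha beta (xdag beta) delta) ->
  cond_generator alpha beta delta m ->
  is_conditional
    (GT (mcol f g) (mblock alpha beta (xdag beta) delta) (mcol s t))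
    (GT (mrow m (g - xcomp m f)) (delta - xcomp m beta) (t - xcomp m s)).
Proof.
move=> /dpositive_mblock_dag11 alpha_sa [m_alpha delta_pos]; split; first exact: delta_pos.
have alpha_m : xcomp alpha (xdag m) = beta by rewrite -alpha_sa -dag_comp m_alpha dag_invol.
rewrite gcomp_copy_marginal gcomp_tensor_id_row alpha_m m_alpha.
by congr GT; [rewrite addrC | |]; rewrite subrK.
Qed.
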